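(* Let $G$ be a group with identity $e$, $A$ a finite set with $|A|\ge2$, $S\subseteq G$ finite with $e\in S$. Suppose $(\mathcal P,f)$ generates a local map $\mu:A^S\to A$ and $|\mathcal P|$ is not a multiple of $|A|$. Then every $s\in S\setminus\{e\}$ is essential for $\mu$.
   Context: $A^S$ is the set of functions $S\to A$. For $s\in S$, $\mathrm{Res}_s(z)=z|_{S\setminus\{s\}}$. An element $s\in S$ is essential for $\mu$ if there exist $z,w\in A^S$ with $\mathrm{Res}_s(z)=\mathrm{Res}_s(w)$ but $\mu(z)\neq\mu(w)$. The pair $(\mathcal P,f)$ generates $\mu$ if $\mathcal P=\{z\in A^S:\mu(z)\neq z(e)\}$ and $f:\mathcal P\to A$ is the restriction of $\mu$ to $\mathcal P$. *)

From HB Require Import structures.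
From mathcomp Require Import all_boot.
From mathcomp Require Import finmap.
Set Implicit Arguments. Unset Strict Implicit. Unset Printing Implicit Defensive.
Local Open Scope fset_scope.

Definition is_group (G : Type) (mul : G -> G -> G) (inv : G -> G) (e : G) : Prop :=
  (forall x y z, mul x (mul y z) = mul (mul x y) z) /\
  (forall x, mul e x = x) /\ (forall x, mul x e = x) /\
  (forall x, mul (inv x) x = e) /\ (forall x, mul x (inv x) = e).

Definition config (G : choiceType) (S : {fset G}) (A : finType) := {ffun S -> A}.

Definition Res (G : choiceType) (S : {fset G}) (A : finType) (s : S)
  (z : {ffun S -> A}) : {ffun {t : S | t != s} -> A} :=
  [ffun t => z (val t)].

Definition essential (G : choiceType) (S : {fset G}) (A : finType)
  (mu : {ffun S -> A} -> A) (s : S) : Prop :=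
  exists z w : {ffun S -> A}, Res s z = Res s w /\ mu z <> mu w.

Definition generates (G : choiceType) (S : {fset G}) (A : finType) (e : G)
  (eS : e \in S) (P : {set {ffun S -> A}}) (f : {z | z \in P} -> A)
  (mu : {ffun S -> A} -> A) : Prop :=
  P = [set z | mu z != z [` eS]] /\ (forall z : {z | z \in P}, f z = mu (val z)).
Arguments generates {G S A e} eS P f mu.
Arguments essential {G S A} mu s.

(* If s is inessential, mu ignores the coordinate s; as s <> e, so does the test
   mu z != z e defining P.  Hence P is a union of fibres of Res_s, each of which
   is a copy of A, and |A| divides |P|. *)
From HB Require Import structures.
From mathcomp Require Import all_boot.
From mathcomp Require Import finmap.
From Stdlib Require Import Classical.
Set Implicit Arguments.
Unset Strict Implicit.
Unset Printing Implicit Defensive.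
Local Open Scope fset_scope.

Section CoordinateUpdate.

Variables (I A : finType) (i : I).

Definition fupd (z : {ffun I -> A}) (a : A) : {ffun I -> A} :=
  [ffun j => if j == i then a else z j].

Lemma fupd_at (z : {ffun I -> A}) (a : A) : fupd z a i = a.
Proof. by rewrite ffunE eqxx. Qed.

Lemma fupd_id (z : {ffun I -> A}) : fupd z (z i) = z.
Proof. by apply/ffunP => j; rewrite ffunE; case: eqP => [->|]. Qed.

Lemma fupd_fupd (z : {ffun I -> A}) (a b : A) : fupd (fupd z a) b = fupd z b.
Proof. by apply/ffunP => j; rewrite !ffunE; case: eqP. Qed.

Lemma fupd_inj (z1 z2 : {ffun I -> A}) (a1 a2 : A) :
  fupd z1 a1 = fupd z2 a2 -> z1 i = z2 i -> z1 = z2 /\ a1 = a2.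
Proof.
move=> eq_upd z12; have a12 : a1 = a2 by rewrite -(fupd_at z1 a1) eq_upd fupd_at.
split=> //; apply/ffunP => j; have := congr1 (fun z : {ffun I -> A} => z j) eq_upd.
by rewrite !ffunE; case: eqP => [->|].
Qed.

Lemma card_fupd_closed (P : {set {ffun I -> A}}) (a0 : A) :
    (forall z a, (fupd z a \in P) = (z \in P)) ->
  #|P| = #|[set z in P | z i == a0]| * #|A|.
Proof.
move=> closedP; set Q := [set z in P | z i == a0].
pose g (p : {ffun I -> A} * A) := fupd p.1 p.2.
have ->: P = g @: setX Q [set: A].
  apply/setP => z; apply/idP/imsetP => [zP | [[y a]]].
    exists (fupd z a0, z i); last by rewrite /g fupd_fupd fupd_id.
    by rewrite !inE closedP zP fupd_at eqxx.
  by rewrite !inE => /andP[/andP[yP _] _] ->; rewrite closedP.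
rewrite card_in_imset ?cardsX ?cardsT // => [[y1 a1] [y2 a2]].
rewrite !inE => /andP[/andP[_ /eqP y1i] _] /andP[/andP[_ /eqP y2i] _].
by rewrite /g /= => /fupd_inj; rewrite y1i y2i => /(_ erefl) [-> ->].
Qed.

Lemma card_dvdn_fupd_closed (P : {set {ffun I -> A}}) :
  (forall z a, (fupd z a \in P) = (z \in P)) -> #|A| %| #|P|.
Proof.
move=> closedP; have [->|[z _]] := set_0Vmem P; first by rewrite cards0 dvdn0.
by rewrite (card_fupd_closed (z i) closedP) dvdn_mull.
Qed.

End CoordinateUpdate.

Section LocalMaps.

Variables (G : choiceType) (S : {fset G}) (A : finType).
Implicit Types (mu : {ffun S -> A} -> A) (z : {ffun S -> A}).

Lemma Res_fupd (s : S) z (a : A) : Res s (fupd s z a) = Res s z.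
Proof. by apply/ffunP => t; rewrite !ffunE (negbTE (valP t)). Qed.

Lemma inessential_fupd mu (s : S) :
  ~ essential mu s -> forall z a, mu (fupd s z a) = mu z.
Proof.
move=> ness z a; have [//|neq_mu] := eqVneq (mu (fupd s z a)) (mu z).
by case: ness; exists (fupd s z a), z; split; [exact: Res_fupd | exact/eqP].
Qed.

Lemma generated_fupd_closed (e : G) (eS : e \in S) mu P f (s : S) :
    generates eS P f mu -> [` eS] != s -> ~ essential mu s ->
  forall z a, (fupd s z a \in P) = (z \in P).
Proof.
move=> [P_def _] es ness z a.
by rewrite P_def !inE inessential_fupd // ffunE (negbTE es).
Qed.

End LocalMaps.

Theorem mainTheorem3 (G : choiceType) (mul : G -> G -> G) (inv : G -> G) (e : G)
  (hG : is_group mul inv e)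
  (A : finType) (hA : 2 <= #|A|)
  (S : {fset G}) (eS : e \in S)
  (mu : {ffun S -> A} -> A)
  (P : {set {ffun S -> A}}) (f : {z | z \in P} -> A)
  (hgen : generates eS P f mu)
  (hP : ~~ (#|A| %| #|P|)) :
  forall s : S, val s != e -> essential mu s.
Proof.
move=> s se; apply: NNPP => ness; move/negP: hP; apply.
have es : [` eS] != s by apply: contraNneq se => <-.
exact: card_dvdn_fupd_closed (generated_fupd_closed hgen es ness).
Qed.
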